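(* Let $h:\{x_1,\dots,x_n\}^*\to\{a_1,\dots,a_k\}^*$ be a solution of rank $n-1$ of both equations $E$ and $E'$, and let $\lambda\in\mathbb Z^n$ have coprime coefficients with $\Gamma_h=\{\mathbf u\in\mathbb Q^n:\lambda\cdot\mathbf u=0\}$. Then for all $j,k\in\{1,\dots,n\}$ the polynomial $t_{jk}^{E,E'}$ is divisible by $\mathbf X^{\lambda^+}-\mathbf X^{\lambda^-}$. In particular, $\mathcal S_E(\beta)$ and $\mathcal S_{E'}(\beta)$ are linearly dependent over $\mathbb Q(x)$ for every $\beta\in\Gamma_h\cap\mathbb N_0^n$.
   Context: An equation is a pair $E=(u,v)$ of words over $\Xi=\{x_1,\dots,x_n\}$; a solution is a morphism $h$ with $h(u)=h(v)$. For $h:\Xi^*\to\{a_1,\dots,a_k\}^*$, $\gamma(h)_i=(|h(x_1)|_{a_i},\dots,|h(x_n)|_{a_i})$, $\Gamma_h$ is the $\mathbb Q$-span of the $\gamma(h)_i$, and the rank of $h$ is $\dim\Gamma_h$. For $E=(x_{i_1}\cdots x_{i_r},\,x_{j_1}\cdots x_{j_s})$ define $S_{E,x_j}=\sum_{a:\,i_a=j}\prod_{t=1}^{a-1}X_{i_t}-\sum_{a:\,j_a=j}\prod_{t=1}^{a-1}X_{j_t}\in\mathbb Z[X_1,\dots,X_n]$ (empty product $=1$), and $t_{jk}^{E,E'}=S_{E,x_j}S_{E',x_k}-S_{E',x_j}S_{E,x_k}$. For $\beta\in\mathbb N_0^n$, $p(\beta)\in\mathbb Z[x]$ is the image of $p$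 under $X_i\mapsto x^{(\beta)_i}$, and $\mathcal S_E(\beta)=(S_{E,x_1}(\beta),\dots,S_{E,x_n}(\beta))\in\mathbb Z[x]^n$. For $\alpha\in\mathbb N_0^n$, $\mathbf X^\alpha=\prod X_i^{(\alpha)_i}$; for $\lambda\in\mathbb Z^n$, $\lambda^\pm\in\mathbb N_0^n$ are the unique vectors with $\lambda=\lambda^+-\lambda^-$, $\lambda^+\cdot\lambda^-=0$; coprime coefficients means gcd of coordinates is $1$. *)

From HB Require Import structures.
From mathcomp Require Import all_boot all_order all_algebra.
Set Implicit Arguments. Unset Strict Implicit. Unset Printing Implicit Defensive.
Import Order.TTheory GRing.Theory Num.Theory.
Local Open Scope ring_scope.

(* Z[X_1,...,X_m] realised as the iterated polynomial ring
   mpoly 0 = Z, mpoly (m+1) = (mpoly m)[Y]; the outer variable of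
   mpoly (m+1) is X_1 (index 0), the variables of mpoly m are X_2..X_{m+1}. *)
Fixpoint mpoly (m : nat) : comNzRingType :=
  match m with
  | 0 => int
  | m'.+1 => {poly (mpoly m')}
  end.

(* The variable with (0-based) index i in mpoly m (0 if i >= m, never used). *)
Fixpoint mvar (m i : nat) : mpoly m :=
  match m return mpoly m with
  | 0 => 0
  | m'.+1 => match i with
             | 0 => ('X : {poly mpoly m'})
             | i'.+1 => ((mvar m' i')%:P : {poly mpoly m'})
             end
  end.

Definition X (n : nat) (i : 'I_n) : mpoly n := mvar n i.

Definition Xmon (n : nat) (alpha : 'I_n -> nat) : mpoly n :=
  \prod_(i < n) X i ^+ alpha i.

(* words over Xi = {x_1..x_n} are seq 'I_n; a morphism h into {a_1..a_k}^*
   is given by the images of the letters. *)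
Definition happ (n k : nat) (h : 'I_n -> seq 'I_k) (w : seq 'I_n) : seq 'I_k :=
  flatten (map h w).

Definition is_solution (n k : nat) (h : 'I_n -> seq 'I_k)
  (E : seq 'I_n * seq 'I_n) : Prop := happ h E.1 = happ h E.2.

(* the matrix whose rows are gamma(h)_1..gamma(h)_k; Gamma_h is its row space *)
Definition gammaM (n k : nat) (h : 'I_n -> seq 'I_k) : 'M[rat]_(k, n) :=
  \matrix_(i < k, j < n) (count_mem i (h j))%:R.

Definition rank_of (n k : nat) (h : 'I_n -> seq 'I_k) : nat := \rank (gammaM h).

Definition Sw (n : nat) (w : seq 'I_n) (j : 'I_n) : mpoly n :=
  \sum_(a < size w | nth j w a == j) \prod_(t < a) X (nth j w t).

Definition S_E (n : nat) (E : seq 'I_n * seq 'I_n) (j : 'I_n) : mpoly n :=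
  Sw E.1 j - Sw E.2 j.

Definition t_EE (n : nat) (E E' : seq 'I_n * seq 'I_n) (j l : 'I_n) : mpoly n :=
  S_E E j * S_E E' l - S_E E' j * S_E E l.

Definition mdvd (n : nat) (p q : mpoly n) : Prop := exists r : mpoly n, q = r * p.

Definition lam_plus (n : nat) (lam : 'I_n -> int) (i : 'I_n) : nat :=
  `|Num.max (lam i) 0|%N.
Definition lam_minus (n : nat) (lam : 'I_n -> int) (i : 'I_n) : nat :=
  `|Num.max (- lam i) 0|%N.

(* p(beta): image of p under X_i |-> x^(beta_i) (beta indexed from 0) *)
Fixpoint meval (m : nat) : (nat -> nat) -> mpoly m -> {poly int} :=
  match m return (nat -> nat) -> mpoly m -> {poly int} with
  | 0 => fun b p => (p : int)%:P
  | m'.+1 => fun b (p : {poly mpoly m'}) =>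
      \sum_(i < size p) meval (fun t => b t.+1) p`_i * 'X^(b 0%N * i)
  end.

Definition evalb (n : nat) (beta : 'I_n -> nat) (p : mpoly n) : {poly int} :=
  meval (fun t => if insub t is Some i then beta i else 0%N) p.

Definition Qx := {fraction {poly rat}}.
Definition toQx (p : {poly int}) : Qx := tofrac (map_poly (fun z : int => z%:~R : rat) p).

(* Map each variable x_j to the monomial Y^gamma(h)_j and push a word through the
   abelianised Fox derivative d/da.  Since h solves E, this gives
   \sum_j S_{E,x_j}(Y^gamma) * d_a h(x_j) = 0 for every letter a, i.e. the vector of
   images of the S_{E,x_j} lies in the kernel of the matrix (d_a h(x_j))_{a,j}.  At
   Y = 1 this matrix becomes the matrix of gamma(h), which has rank n - 1, so it has
   a nonzero (n-1)-minor and its kernel is a line (Cramer's rule).  The images of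
   S_E and S_E' are therefore proportional and every t_jk lies in the kernel of the
   monomial map X_j |-> Y^gamma_j.  As the integer relations among the columns of
   gamma(h) are exactly Z lam, reducing monomials along X^lam+ -> X^lam- shows that
   this kernel is generated by X^lam+ - X^lam-.  Finally X^lam+ and X^lam- agree at
   every beta in Gamma_h, so the 2x2 minors of (S_E(beta), S_E'(beta)) vanish. *)

From Pilot Require Import Defs.
From HB Require Import structures.
From mathcomp Require Import all_boot all_order all_algebra.
From mathcomp Require Import zify ring mpoly.
Import Order.TTheory GRing.Theory Num.Theory.
Local Open Scope ring_scope.

(** * Evaluating iterated polynomials *)

Fixpoint mpoly_eval (R : comNzRingType) (m : nat) (f : nat -> R) :
    {rmorphism Defs.mpoly m -> R} :=
  match m return {rmorphism Defs.mpoly m -> R} with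
  | 0 => intr
  | m'.+1 => (horner_eval (f 0%N) \o map_poly (mpoly_eval R m' (fun t => f t.+1)))%FUN
  end.
Arguments mpoly_eval {R} m f.

Lemma mpoly_eval_mvar (R : comNzRingType) m (f : nat -> R) i :
  (i < m)%N -> mpoly_eval m f (mvar m i) = f i.
Proof.
elim: m f i => [//|m IH] f [|i] lt_i_m; rewrite /= /horner_eval /=.
  by rewrite map_polyX hornerX.
by rewrite map_polyC hornerC; apply: (IH (fun t => f t.+1)).
Qed.

Lemma mpoly_morph_ext (R : comNzRingType) m (g1 g2 : {rmorphism Defs.mpoly m -> R}) :
  (forall i, (i < m)%N -> g1 (mvar m i) = g2 (mvar m i)) -> g1 =1 g2.
Proof.
elim: m g1 g2 => [|m IH] g1 g2 eq_g p.
  by rewrite -[p]intz !rmorph_int.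
have eq_gC : (g1 \o polyC)%FUN =1 (g2 \o polyC)%FUN.
  by apply: IH => i lt_i_m; apply: (eq_g i.+1).
rewrite -[p]coefK poly_def !rmorph_sum; apply: eq_bigr => i _.
rewrite -mul_polyC !rmorphM !rmorphXn.
by have /= -> := eq_gC p`_i; have /= -> := eq_g 0%N erefl.
Qed.

Lemma meval_mpoly_eval m (b : nat -> nat) (p : Defs.mpoly m) :
  Defs.meval b p = mpoly_eval m (fun t => 'X^(b t) : {poly int}) p.
Proof.
elim: m b p => [|m IH] b p /=.
  by rewrite -[in LHS](intz p) polyCMz polyC1.
have le_size : (size (map_poly (mpoly_eval m (fun t => 'X^(b t.+1) : {poly int})) p) <= size p)%N.
  by rewrite map_polyE; apply: leq_trans (size_Poly _) _; rewrite size_map.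
rewrite [RHS]/horner_eval /= (horner_coef_wide _ le_size); apply: eq_bigr => i _.
by rewrite coef_map /= IH exprM.
Qed.

Definition to_mpoly n : {rmorphism Defs.mpoly n -> {mpoly int[n]}} :=
  mpoly_eval n (fun t => if insub t is Some i then 'X_i else 0).

Definition of_mpoly n : {rmorphism {mpoly int[n]} -> Defs.mpoly n} := mmap intr (@X n).

Arguments to_mpoly {n}.
Arguments of_mpoly {n}.

Lemma to_mpoly_X n (i : 'I_n) : to_mpoly (X i) = 'X_i.
Proof. by rewrite /to_mpoly /X mpoly_eval_mvar // valK. Qed.

Lemma of_mpolyX n (m : 'X_{1..n}) : of_mpoly 'X_[m] = Xmon (fun i => m i).
Proof. by rewrite /of_mpoly /= mmapX. Qed.

Lemma to_mpolyK n : cancel (@to_mpoly n) of_mpoly.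
Proof.
apply: (@mpoly_morph_ext _ n (mmap intr (@X n) \o to_mpoly)%FUN idfun) => i lt_i_n /=.
by rewrite -[mvar n i]/(X (Ordinal lt_i_n)) to_mpoly_X mmapX mmap1U.
Qed.

Lemma sum_delta (R : pzSemiRingType) n (F : 'I_n -> R) i :
  \sum_(j < n) (i == j)%:R * F j = F i.
Proof.
rewrite (bigD1 i) //= eqxx mul1r big1 ?addr0 // => j.
by rewrite eq_sym => /negPf ->; rewrite mul0r.
Qed.

Lemma codom_compl1 {r} {g : 'I_r -> 'I_r.+1} : injective g ->
  exists c, forall j, (j \notin codom g) = (j == c).
Proof.
move=> g_inj; have /card1P [c Hc] : #|[predC codom g]| == 1%N.
  by apply/eqP/(@addnI r); rewrite -{1}(card_ord r) -(card_codom g_inj) cardC !card_ord addn1.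
by exists c => j; have := Hc j; rewrite !inE.
Qed.

Lemma sum_codom_compl {V : nmodType} {r} {g : 'I_r -> 'I_r.+1} {c} (F : 'I_r.+1 -> V) :
  injective g -> (forall j, (j \notin codom g) = (j == c)) ->
  \sum_j F j = F c + \sum_i F (g i).
Proof.
move=> g_inj Hc; rewrite (bigD1 c) //=; congr (_ + _).
rewrite -(big_imset _ (in2W g_inj)) /=; apply: eq_bigl => j.
by rewrite -Hc negbK; apply/codomP/imsetP => [[i ->]|[i _ ->]]; exists i.
Qed.

Section KernelOfCorank1.
Context {R : idomainType} {m r : nat} {P : 'M[R]_(m, r.+1)}.
Context {f : 'I_r -> 'I_m} {g : 'I_r -> 'I_r.+1}.
Hypotheses (g_inj : injective g) (minor_neq0 : \det (mxsub f g P) != 0).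

Local Notation Q := (mxsub f g P).
Local Notation D := (\det (mxsub f g P)).

(* Cramer's rule: on the kernel of [P], the coordinates indexed by [g] are
   determined by the remaining coordinate [s c]. *)
Lemma kernel_cramer {c : 'I_r.+1} : (forall j, (j \notin codom g) = (j == c)) ->
  forall j, exists om, forall s : 'I_r.+1 -> R,
    (forall a, \sum_l P a l * s l = 0) -> D * s j = s c * om.
Proof.
move=> Hc j; have [->|] := eqVneq j c; first by exists D => s _; rewrite mulrC.
rewrite -Hc negbK => /codomP [i ->].
exists (- (\adj Q *m \col_i0 P (f i0) c) i 0) => s Ps0.
have Qs : Q *m (\col_i0 s (g i0)) = - (s c *: \col_i0 P (f i0) c).
  apply/matrixP => i1 j1; rewrite !mxE.
  move/eqP: (Ps0 (f i1)); rewrite (sum_codom_compl _ g_inj Hc) addrC addr_eq0 => /eqP sum_g.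
  by rewrite mulrC -sum_g; apply: eq_bigr => i2 _; rewrite !mxE.
have := congr1 (fun v => (\adj Q *m v) i 0) Qs.
by rewrite mulmxA mul_adj_mx mul_scalar_mx mulmxN -scalemxAr !mxE mulrN => ->.
Qed.

Lemma kernel_corank1_cross {s s' : 'I_r.+1 -> R} :
  (forall a, \sum_l P a l * s l = 0) -> (forall a, \sum_l P a l * s' l = 0) ->
  forall j l, s j * s' l = s' j * s l.
Proof.
move=> Ps0 Ps'0 j l; have [c Hc] := codom_compl1 g_inj.
have [oj Hj] := kernel_cramer Hc j; have [ol Hl] := kernel_cramer Hc l.
apply: (mulfI (mulf_neq0 minor_neq0 minor_neq0)).
have -> : D * D * (s j * s' l) = (D * s j) * (D * s' l) by ring.
have -> : D * D * (s' j * s l) = (D * s' j) * (D * s l) by ring.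
rewrite (Hj s Ps0) (Hl s' Ps'0) (Hj s' Ps'0) (Hl s Ps0); ring.
Qed.

End KernelOfCorank1.

Lemma rank_minor_neq0 {F : fieldType} {m n} (A : 'M[F]_(m, n)) :
  exists (f : 'I_(\rank A) -> 'I_m) (g : 'I_(\rank A) -> 'I_n),
    injective g /\ \det (mxsub f g A) != 0.
Proof.
have Tfull : row_full (rowsub (maxrankfun A) A)^T.
  by rewrite /row_full mxrank_tr; exact: maxrowsub_free.
exists (maxrankfun A), (fullrankfun Tfull); split; first exact: fullrankfun_inj.
have := fullrowsub_unit Tfull; rewrite unitmxE unitfE.
suff -> : rowsub (fullrankfun Tfull) (rowsub (maxrankfun A) A)^T
  = (mxsub (maxrankfun A) (fullrankfun Tfull) A)^T by rewrite det_tr.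
by apply/matrixP => i j; rewrite !mxE.
Qed.

Lemma bezout_gcdn_big {n} (lam : 'I_n -> int) :
  exists a : 'I_n -> int, \sum_(i < n) a i * lam i = (\big[gcdn/0%N]_(i < n) `|lam i|%N)%:Z.
Proof.
elim: n lam => [|n IH] lam; first by exists (fun _ => 0); rewrite !big_ord0.
have [a Ha] := IH (fun i => lam (widen_ord (leqnSn n) i)).
set g := \big[gcdn/0%N]_(i < n) _ in Ha.
have [u [v Huv]] := Bezoutz g%:Z (lam ord_max).
exists (fun i => if unlift ord_max i is Some j then u * a j else v).
rewrite big_ord_recr (@big_ord_recr _ _ gcdn) /= -/g unlift_none.
have -> : (gcdn g `|lam ord_max|)%:Z = gcdz g%:Z (lam ord_max) by rewrite /gcdz absz_nat.
rewrite -Huv -Ha mulr_sumr; congr (_ + _).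
apply: eq_bigr => i _; rewrite mulrA.
suff -> : widen_ord (leqnSn n) i = lift ord_max i by rewrite liftK.
by apply: val_inj; rewrite [RHS]lift_max.
Qed.

Lemma cross_eq_primitive_multiple n (lam d : 'I_n -> int) :
  \big[gcdn/0%N]_(i < n) `|lam i|%N = 1%N ->
  (forall i j, lam i * d j = lam j * d i) -> exists z : int, forall i, d i = z * lam i.
Proof.
move=> lam_prim cross; have [a] := bezout_gcdn_big lam; rewrite lam_prim => Ha.
exists (\sum_(i < n) a i * d i) => j.
rewrite -[d j]mul1r -[1]/(1%N%:Z) -Ha !mulr_suml; apply: eq_bigr => i _.
by rewrite -!mulrA cross [lam j * _]mulrC.
Qed.

Lemma cross_eq_dependent (K : fieldType) n (s s' : 'I_n -> K) :
  (forall j l, s j * s' l = s' j * s l) ->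
  exists c1 c2 : K, (c1 != 0 \/ c2 != 0) /\ forall j, c1 * s j + c2 * s' j = 0.
Proof.
move=> cross; have [/existsP [j0 s_j0]|/existsPn s0] := boolP [exists j, s j != 0].
  exists (s' j0), (- s j0); split=> [|j]; first by right; rewrite oppr_eq0.
  by rewrite mulNr cross mulrC subrr.
exists 1, 0; split=> [|j]; first by left; rewrite oner_eq0.
by rewrite mul0r addr0 mul1r; apply/eqP; rewrite -[_ == _]negbK s0.
Qed.

(** * Kernels of monomial maps *)

Section MonomialMap.
Variables (R : comNzRingType) (n k : nat) (M : 'I_n -> 'X_{1..k}).

Definition monomial_exp (u : 'X_{1..n}) : 'X_{1..k} :=
  [multinom (\sum_(i < n) M i c * u i)%N | c < k].

Definition monomial_map : {rmorphism {mpoly R[n]} -> {mpoly R[k]}} :=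
  mmap (@mpolyC k R) (fun i => 'X_[M i]).

Lemma monomial_mapX u : monomial_map 'X_[u] = 'X_[monomial_exp u].
Proof.
rewrite /monomial_map /= mmapX /mmap1.
under eq_bigr => i _ do rewrite mpolyXn.
rewrite -(big_morph (fun m => 'X_[m] : {mpoly R[k]}) (@mpolyXD _ _) (mpolyX0 _ _)).
congr 'X_[_]; apply/mnmP => c; rewrite mnm_sumE mnmE.
by apply: eq_bigr => i _; rewrite mulmnE.
Qed.

Lemma monomial_mapZ c p : monomial_map (c *: p) = c *: monomial_map p.
Proof. by rewrite /monomial_map /= mmapZ mul_mpolyC. Qed.

End MonomialMap.

Arguments monomial_exp {n k} M u.
Arguments monomial_map {R n k} M.

Lemma mcoeff_sumZX (R : nzRingType) n (I : Type) (s : seq I) (c : I -> R) (g : I -> 'X_{1..n}) u :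
  (\sum_(i <- s) c i *: 'X_[g i] : {mpoly R[n]})@_u =
  \sum_(i <- s) c i * (g i == u)%:R.
Proof.
elim: s => [|x s IH]; first by rewrite !big_nil mcoeff0.
by rewrite !big_cons mcoeffD mcoeffZ mcoeffX IH.
Qed.

Section BinomialKernel.
Context {R : comNzRingType} {n k : nat} {M : 'I_n -> 'X_{1..k}} {lp lm : 'X_{1..n}}.
Hypothesis disjoint_lp_lm : forall i, (lp i * lm i = 0)%N.
Hypothesis lp_neq0 : exists i, (0 < lp i)%N.
Hypothesis monomial_exp_lp : monomial_exp M lp = monomial_exp M lm.
Hypothesis monomial_exp_fibre : forall u v, monomial_exp M u = monomial_exp M v ->
  exists z : int, forall i, (u i)%:Z = (v i)%:Z + z * ((lp i)%:Z - (lm i)%:Z).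

Local Notation binomial := ('X_[lp] - 'X_[lm] : {mpoly R[n]}).

(* Rewriting exponents along X^lp -> X^lm strictly decreases the weight [wt],
   so [wt m].+1 steps of fuel reach an irreducible exponent. *)
Let step (m : 'X_{1..n}) := (m - lp + lm)%MM.
Let wt (m : 'X_{1..n}) := (\sum_(i < n) m i * lp i)%N.

Let wt_step m : (lp <= m)%MM -> (wt (step m) < wt m)%N.
Proof.
move=> /mnm_lepP le_lp_m.
have -> : wt m = (wt (step m) + \sum_(i < n) lp i * lp i)%N.
  rewrite /wt -big_split /=; apply: eq_bigr => i _.
  rewrite /step !mnmE mulnDl (mulnC (lm i)) disjoint_lp_lm addn0 mulnBl subnK //.
  by rewrite leq_mul2r le_lp_m orbT.
have [i0 lp_i0] := lp_neq0.
by rewrite -[X in (X < _)%N]addn0 ltn_add2l (bigD1 i0) //= ltn_addr // muln_gt0 lp_i0.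
Qed.

Let Fixpoint reduce (fuel : nat) (m : 'X_{1..n}) : 'X_{1..n} :=
  match fuel with
  | 0 => m
  | fuel'.+1 => if (lp <= m)%MM then reduce fuel' (step m) else m
  end.

Let normal m := reduce (wt m).+1 m.

Let reduce_irreducible fuel m : (wt m < fuel)%N -> ~~ (lp <= reduce fuel m)%MM.
Proof.
elim: fuel m => [//|fuel IH] m lt_wt /=.
case: ifP => le_lp_m; last by rewrite le_lp_m.
by apply: IH; have := wt_step m le_lp_m; lia.
Qed.

Let normal_irreducible m : ~~ (lp <= normal m)%MM.
Proof. exact: reduce_irreducible. Qed.

Let reduce_congr fuel m : exists q, 'X_[m] - 'X_[reduce fuel m] = q * binomial.
Proof.
elim: fuel m => [|fuel IH] m /=; first by exists 0; rewrite subrr mul0r.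
case: ifP => le_lp_m; last by exists 0; rewrite subrr mul0r.
have [q Hq] := IH (step m).
exists ('X_[m - lp] + q).
rewrite mulrDl -Hq mulrBr -!mpolyXD submK //.
by rewrite /step; ring.
Qed.

Let irreducible_fibre_uniq u v : ~~ (lp <= u)%MM -> ~~ (lp <= v)%MM ->
  monomial_exp M u = monomial_exp M v -> u = v.
Proof.
move=> irr_u irr_v /monomial_exp_fibre [z Hz].
have [z_lt0|z_gt0|z_eq0] := ltgtP z 0.
- case/negP: irr_v; apply/mnm_lepP => i.
  have := Hz i; have /eqP := disjoint_lp_lm i.
  by case: (lp i) => [//|l]; rewrite muln_eq0 /= => /eqP ->; nia.
- case/negP: irr_u; apply/mnm_lepP => i.
  have := Hz i; have /eqP := disjoint_lp_lm i.
  by case: (lp i) => [//|l]; rewrite muln_eq0 /= => /eqP ->; nia.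
- by apply/mnmP => i; have /eqP := Hz i; rewrite z_eq0 mul0r addr0 eqz_nat => /eqP.
Qed.

Lemma monomial_map_kernel_lp (p : {mpoly R[n]}) :
  monomial_map M p = 0 -> exists q, p = q * binomial.
Proof.
move=> Mp0.
pose r := \sum_(m <- msupp p) p@_m *: 'X_[normal m].
have [q Hq] : exists q, p - r = q * binomial.
  rewrite {1}(mpolyE p) /r -sumrB.
  elim: (msupp p) => [|m s [q IH]]; first by exists 0; rewrite big_nil mul0r.
  have [q1 Hq1] := reduce_congr (wt m).+1 m.
  exists (p@_m *: q1 + q).
  by rewrite big_cons IH -scalerBr Hq1 mulrDl scalerAl.
suff r0 : r = 0 by exists q; rewrite -Hq r0 subr0.
have Mr0 : monomial_map M r = 0.
  have -> : r = p - q * binomial by rewrite -Hq opprB addrC subrK.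
  by rewrite rmorphB rmorphM rmorphB !monomial_mapX monomial_exp_lp subrr mulr0 Mp0 subr0.
apply/mpolyP => u; rewrite mcoeff0 mcoeff_sumZX.
have [le_lp_u|irr_u] := boolP (lp <= u)%MM.
  rewrite big1 // => m _.
  have /negbTE -> : normal m != u by apply: contraNneq (normal_irreducible m) => ->.
  by rewrite mulr0.
have := congr1 (mcoeff (monomial_exp M u)) Mr0.
rewrite /r mcoeff0 (rmorph_sum (monomial_map M)).
under eq_bigr => m _ do rewrite monomial_mapZ monomial_mapX.
rewrite mcoeff_sumZX => Mr0u; apply: etrans _ Mr0u; apply: eq_bigr => m _; congr (_ * _%:R).
have [->|neq_mu] := eqVneq (normal m) u; first by rewrite eqxx.
case: eqP => // /(irreducible_fibre_uniq _ _ (normal_irreducible m) irr_u) eq_mu.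
by rewrite eq_mu eqxx in neq_mu.
Qed.

End BinomialKernel.

Lemma monomial_map_kernel {R : comNzRingType} {n k} {M : 'I_n -> 'X_{1..k}} {lp lm : 'X_{1..n}}
    {p : {mpoly R[n]}} :
  (forall i, (lp i * lm i = 0)%N) -> lp != lm ->
  monomial_exp M lp = monomial_exp M lm ->
  (forall u v, monomial_exp M u = monomial_exp M v ->
     exists z : int, forall i, (u i)%:Z = (v i)%:Z + z * ((lp i)%:Z - (lm i)%:Z)) ->
  monomial_map M p = 0 -> exists q, p = q * ('X_[lp] - 'X_[lm]).
Proof.
move=> disj neq_lp_lm exp_lp fibre Mp0.
have [lp_neq0|lp_eq0] := boolP [exists i, (0 < lp i)%N].
  by move/existsP: lp_neq0 => lp_neq0; apply: (monomial_map_kernel_lp disj lp_neq0 exp_lp fibre).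
have lm_neq0 : exists i, (0 < lm i)%N.
  apply/existsP; apply: contraNT neq_lp_lm => /existsPn lm_eq0.
  apply/eqP/mnmP => i; move/existsPn: lp_eq0 => /(_ i).
  by have := lm_eq0 i; rewrite !lt0n !negbK => /eqP -> /eqP ->.
have fibre' u v : monomial_exp M u = monomial_exp M v ->
    exists z : int, forall i, (u i)%:Z = (v i)%:Z + z * ((lm i)%:Z - (lp i)%:Z).
  by move/fibre => [z Hz]; exists (- z) => i; rewrite Hz; ring.
have [q ->] := monomial_map_kernel_lp
  (fun i => ltac:(by rewrite mulnC)) lm_neq0 (esym exp_lp) fibre' p Mp0.
by exists (- q); rewrite mulNr -mulrN opprB.
Qed.

(** * Abelianised Fox calculus *)

Section FoxCalculus.
Variable k : nat.

Definition parikh (s : seq 'I_k) : 'X_{1..k} := [multinom count_mem c s | c < k].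

Lemma parikh_cat s1 s2 : parikh (s1 ++ s2) = (parikh s1 + parikh s2)%MM.
Proof. by apply/mnmP => c; rewrite mnmDE !mnmE count_cat. Qed.

Lemma parikh_nil : parikh [::] = 0%MM.
Proof. by apply/mnmP => c; rewrite !mnmE. Qed.

Fixpoint fox (a : 'I_k) (s : seq 'I_k) : {mpoly int[k]} :=
  if s is c :: s' then (c == a)%:R + 'X_[parikh [:: c]] * fox a s' else 0.

Lemma fox_cat a s1 s2 : fox a (s1 ++ s2) = fox a s1 + 'X_[parikh s1] * fox a s2.
Proof.
elim: s1 => [|c s1 IH] /=; first by rewrite parikh_nil mpolyX0 add0r mul1r.
by rewrite IH mulrDr addrA mulrA -mpolyXD -parikh_cat.
Qed.

Definition mpoly_at1 : {rmorphism {mpoly int[k]} -> rat} := mmap intr (fun _ => 1).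

Lemma fox_at1 a s : mpoly_at1 (fox a s) = (count_mem a s)%:R.
Proof.
elim: s => [|c s IH] /=; first exact: rmorph0.
rewrite rmorphD rmorphM rmorph_nat IH /mpoly_at1 /= mmapX /mmap1 big1 ?mul1r -?natrD //.
by move=> i _; rewrite expr1n.
Qed.

End FoxCalculus.

Arguments parikh {k} s.
Arguments fox {k} a s.
Arguments mpoly_at1 {k}.

Section SolutionsAndFox.
Context {n k : nat} (h : 'I_n -> seq 'I_k).

Definition parikh_eval : {rmorphism Defs.mpoly n -> {mpoly int[k]}} :=
  mpoly_eval n (fun t => if insub t is Some j then 'X_[parikh (h j)] else 0).

Lemma parikh_eval_X (j : 'I_n) : parikh_eval (X j) = 'X_[parikh (h j)].
Proof. by rewrite /parikh_eval /X mpoly_eval_mvar // valK. Qed.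

Lemma parikh_eval_monomial p :
  parikh_eval p = monomial_map (fun j => parikh (h j)) (to_mpoly p).
Proof.
apply: (@mpoly_morph_ext _ n _ (monomial_map (fun j => parikh (h j)) \o to_mpoly)%FUN) => i lt_i_n.
by rewrite -[mvar n i]/(X (Ordinal lt_i_n)) parikh_eval_X /= to_mpoly_X mmapX mmap1U.
Qed.

Lemma Sw_cons (x : 'I_n) w j : Sw (x :: w) j = (x == j)%:R + X x * Sw w j.
Proof.
rewrite /Sw /= big_mkcond big_ord_recl /= [in RHS]big_mkcond mulr_sumr.
congr (_ + _); first by rewrite big_ord0; case: (x == j).
apply: eq_bigr => i _.
by rewrite add0n; case: ifP => _; rewrite ?mulr0 // big_ord_recl.
Qed.

Lemma fox_happ a w : fox a (happ h w) = \sum_(j < n) parikh_eval (Sw w j) * fox a (h j).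
Proof.
elim: w => [|x w IH].
  by rewrite big1 // => j _; rewrite /Sw big_ord0 rmorph0 mul0r.
rewrite -[happ h _]/(h x ++ happ h w) fox_cat IH.
under [RHS]eq_bigr => j _ do
  rewrite Sw_cons rmorphD rmorphM parikh_eval_X rmorph_nat mulrDl.
rewrite big_split /= mulr_sumr; congr (_ + _); last by apply: eq_bigr => j _; rewrite mulrA.
by rewrite sum_delta.
Qed.

Lemma fox_solution E a : is_solution h E ->
  \sum_(j < n) parikh_eval (S_E E j) * fox a (h j) = 0.
Proof.
move=> solE; under eq_bigr => j _ do rewrite rmorphB mulrBl.
by rewrite sumrB -!fox_happ solE subrr.
Qed.

End SolutionsAndFox.

Arguments parikh_eval {n k} h.

(** * The lattice of Gamma_h *)

Lemma Posz_sum (I : Type) (s : seq I) (F : I -> nat) :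
  (\sum_(i <- s) F i)%N%:Z = \sum_(i <- s) (F i)%:Z.
Proof. exact: (big_morph Posz PoszD erefl). Qed.

Lemma lam_plus_minus n (lam : 'I_n -> int) i :
  (lam_plus lam i)%:Z - (lam_minus lam i)%:Z = lam i.
Proof. by rewrite /lam_plus /lam_minus; case: (lam i) => m; lia. Qed.

Lemma lam_plus_minus_disjoint n (lam : 'I_n -> int) i :
  (lam_plus lam i * lam_minus lam i = 0)%N.
Proof. by rewrite /lam_plus /lam_minus; case: (lam i) => m; lia. Qed.

Definition gamma_orth {n k} (h : 'I_n -> seq 'I_k) (d : 'I_n -> int) :=
  forall c : 'I_k, \sum_(i < n) (count_mem c (h i))%:Z * d i = 0.

Section GammaLattice.
Context {n k : nat} {h : 'I_n -> seq 'I_k} {lam : 'I_n -> int}.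
Hypothesis Gamma_lam : forall u : 'rV[rat]_n,
  (u <= gammaM h)%MS <-> \sum_(i < n) (lam i)%:~R * u ord0 i = 0.

Lemma gamma_orth_lam : gamma_orth h lam.
Proof.
move=> c; have := (Gamma_lam (row c (gammaM h))).1 (row_sub c _).
under eq_bigr => i _ do rewrite !mxE.
move=> sum0; apply/eqP; rewrite -(eqr_int rat) rmorph_sum rmorph0; apply/eqP.
by apply: etrans _ sum0; apply: eq_bigr => i _; rewrite rmorphM /= mulrC.
Qed.

Lemma gamma_orth_span {d} {x : 'rV[rat]_n} : gamma_orth h d ->
  (x <= gammaM h)%MS -> \sum_(i < n) x ord0 i * (d i)%:~R = 0.
Proof.
move=> orth_d /submxP [y ->].
under eq_bigr => i _ do rewrite mxE mulr_suml.
rewrite exchange_big big1 //= => c _.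
under eq_bigr => i _ do rewrite mxE -mulrA.
rewrite -mulr_sumr.
suff -> : \sum_(i < n) (count_mem c (h i))%:R * (d i)%:~R = (0 : int)%:~R :> rat.
  by rewrite mulr0.
by rewrite -(orth_d c) rmorph_sum; apply: eq_bigr => i _; rewrite rmorphM.
Qed.

Lemma gamma_orth_multiple {d} :
  \big[gcdn/0%N]_(i < n) `|lam i|%N = 1%N -> gamma_orth h d ->
  exists z : int, forall i, d i = z * lam i.
Proof.
move=> lam_prim orth_d; apply: cross_eq_primitive_multiple => // i j.
pose x : 'rV[rat]_n :=
  \row_t ((j == t)%:R * (lam i)%:~R - (i == t)%:R * (lam j)%:~R).
have Gamma_x : (x <= gammaM h)%MS.
  apply/Gamma_lam.
  under eq_bigr => t _ do rewrite mxE mulrC mulrBl -!mulrA.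
  by rewrite sumrB !sum_delta mulrC subrr.
have := gamma_orth_span orth_d Gamma_x.
under eq_bigr => t _ do rewrite mxE mulrBl -!mulrA.
rewrite sumrB !sum_delta => /eqP; rewrite subr_eq0 -!intrM eqr_int => /eqP.
by rewrite mulrC => ->; rewrite mulrC.
Qed.

End GammaLattice.

Lemma nat_row_gamma_orth {n k} {h : 'I_n -> seq 'I_k} {lam : 'I_n -> int} {beta : 'I_n -> nat} :
  (forall u : 'rV[rat]_n,
      (u <= gammaM h)%MS <-> \sum_(i < n) (lam i)%:~R * u ord0 i = 0) ->
  (\row_(i < n) ((beta i)%:R : rat) <= gammaM h)%MS ->
  \sum_(i < n) lam i * (beta i)%:Z = 0.
Proof.
move=> Gamma_lam /Gamma_lam sum0; apply/eqP; rewrite -(eqr_int rat) rmorph_sum rmorph0.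
by apply/eqP; apply: etrans _ sum0; apply: eq_bigr => i _; rewrite mxE rmorphM.
Qed.

Lemma monomial_exp_parikhP n k (h : 'I_n -> seq 'I_k) (u v : 'X_{1..n}) :
  monomial_exp (fun j => parikh (h j)) u = monomial_exp (fun j => parikh (h j)) v <->
  gamma_orth h (fun i => (u i)%:Z - (v i)%:Z).
Proof.
rewrite mnmP; split=> [eq_uv c|orth c].
  have := eq_uv c; rewrite !mnmE => /(congr1 Posz); rewrite !Posz_sum => /eqP.
  rewrite -subr_eq0 -sumrB => /eqP sum0; apply: etrans _ sum0; apply: eq_bigr => i _.
  by rewrite !mnmE !PoszM mulrBr.
rewrite !mnmE; apply/eqP; rewrite -eqz_nat !Posz_sum -subr_eq0 -sumrB; apply/eqP.
by apply: etrans _ (orth c); apply: eq_bigr => i _; rewrite !mnmE !PoszM mulrBr.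
Qed.

Lemma parikh_eval_kernel {n k} {h : 'I_n -> seq 'I_k} {lam : 'I_n -> int} {p} :
  \big[gcdn/0%N]_(i < n) `|lam i|%N = 1%N ->
  (forall u : 'rV[rat]_n,
      (u <= gammaM h)%MS <-> \sum_(i < n) (lam i)%:~R * u ord0 i = 0) ->
  parikh_eval h p = 0 -> mdvd (Xmon (lam_plus lam) - Xmon (lam_minus lam)) p.
Proof.
move=> lam_prim Gamma_lam p0.
pose lp : 'X_{1..n} := [multinom lam_plus lam i | i < n].
pose lm : 'X_{1..n} := [multinom lam_minus lam i | i < n].
have lp_lm i : (lp i)%:Z - (lm i)%:Z = lam i by rewrite !mnmE lam_plus_minus.
have disj i : (lp i * lm i = 0)%N by rewrite !mnmE lam_plus_minus_disjoint.
have neq_lp_lm : lp != lm.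
  apply: contra_eq_neq lam_prim => eq_lp_lm; rewrite big1 // => i _.
  by rewrite -lp_lm eq_lp_lm subrr.
have exp_lp : monomial_exp (fun j => parikh (h j)) lp = monomial_exp (fun j => parikh (h j)) lm.
  by apply/monomial_exp_parikhP => c; under eq_bigr => i _ do rewrite lp_lm; exact: gamma_orth_lam.
have fibre u v : monomial_exp (fun j => parikh (h j)) u = monomial_exp (fun j => parikh (h j)) v ->
    exists z : int, forall i, (u i)%:Z = (v i)%:Z + z * ((lp i)%:Z - (lm i)%:Z).
  move/monomial_exp_parikhP/(gamma_orth_multiple Gamma_lam lam_prim) => [z Hz].
  by exists z => i; rewrite lp_lm -Hz addrC subrK.
rewrite parikh_eval_monomial in p0.
have [q Hq] := monomial_map_kernel disj neq_lp_lm exp_lp fibre p0.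
exists (of_mpoly q); rewrite -[p]to_mpolyK Hq rmorphM rmorphB !of_mpolyX.
by congr (_ * (_ - _)); apply: eq_bigr => i _; rewrite mnmE.
Qed.

Lemma parikh_eval_t_EE {r k} {h : 'I_r.+1 -> seq 'I_k} {E E'} :
  is_solution h E -> is_solution h E' -> \rank (gammaM h) = r ->
  forall j l, parikh_eval h (t_EE E E' j l) = 0.
Proof.
move=> solE solE' rank_h j l.
pose P : 'M[{mpoly int[k]}]_(k, r.+1) := \matrix_(a, i) fox a (h i).
have P_at1 : map_mx mpoly_at1 P = gammaM h.
  by apply/matrixP => a i; rewrite !mxE fox_at1.
have [f [g [g_inj]]] : exists (f : 'I_r -> 'I_k) (g : 'I_r -> 'I_r.+1),
    injective g /\ \det (mxsub f g (gammaM h)) != 0.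
  by move: (rank_minor_neq0 (gammaM h)); rewrite rank_h.
rewrite -P_at1 -map_mxsub det_map_mx => minor_neq0.
have minorP_neq0 : \det (mxsub f g P) != 0.
  by apply: contraNneq minor_neq0 => ->; rewrite rmorph0.
have P_kernel E0 : is_solution h E0 ->
    forall a, \sum_i P a i * parikh_eval h (S_E E0 i) = 0.
  move=> solE0 a; apply: etrans _ (fox_solution h E0 a solE0).
  by apply: eq_bigr => i _; rewrite mxE mulrC.
have cross := kernel_corank1_cross g_inj minorP_neq0 (P_kernel _ solE) (P_kernel _ solE').
by rewrite /t_EE rmorphB !rmorphM cross subrr.
Qed.

Lemma evalbE n (beta : 'I_n -> nat) p :
  evalb beta p = mpoly_eval n (fun t => 'X^(if insub t is Some i then beta i else 0%N)) p.
Proof. exact: meval_mpoly_eval. Qed.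

Lemma evalb_Xmon n (beta : 'I_n -> nat) (al : 'I_n -> nat) :
  evalb beta (Xmon al) = 'X^(\sum_(i < n) beta i * al i).
Proof.
rewrite evalbE /Xmon rmorph_prod (big_morph _ (exprD 'X) (expr0 'X)).
by apply: eq_bigr => i _; rewrite rmorphXn /X mpoly_eval_mvar // valK exprM.
Qed.

Lemma evalb_binomial {n} {beta : 'I_n -> nat} {lam : 'I_n -> int} :
  \sum_(i < n) lam i * (beta i)%:Z = 0 ->
  evalb beta (Xmon (lam_plus lam) - Xmon (lam_minus lam)) = 0.
Proof.
move=> lam_beta; rewrite evalbE rmorphB -!evalbE !evalb_Xmon; apply/eqP.
rewrite subr_eq0; apply/eqP; congr 'X^_; apply/eqP; rewrite -eqz_nat !Posz_sum.
rewrite -subr_eq0 -sumrB -[X in _ == X]lam_beta; apply/eqP/eq_bigr => i _.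
by rewrite !PoszM -mulrBr lam_plus_minus mulrC.
Qed.

Lemma toQx_cross a b c d : a * b = c * d -> toQx a * toQx b = toQx c * toQx d.
Proof. by rewrite /toQx -!rmorphM => ->. Qed.

Theorem lemma3p9 (n k : nat) (h : 'I_n -> seq 'I_k)
  (E E' : seq 'I_n * seq 'I_n) (lam : 'I_n -> int) :
  is_solution h E -> is_solution h E' ->
  (rank_of h).+1 = n ->
  (\big[gcdn/0%N]_(i < n) `|lam i|%N = 1%N) ->
  (forall u : 'rV[rat]_n,
      (u <= gammaM h)%MS <-> \sum_(i < n) (lam i)%:~R * u ord0 i = 0) ->
  (forall j l : 'I_n,
      mdvd (Xmon (lam_plus lam) - Xmon (lam_minus lam)) (t_EE E E' j l)) /\
  (forall beta : 'I_n -> nat,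
      (\row_(i < n) ((beta i)%:R : rat) <= gammaM h)%MS ->
      exists c1 c2 : Qx, (c1 != 0 \/ c2 != 0) /\
        forall j : 'I_n,
          c1 * toQx (evalb beta (S_E E j)) + c2 * toQx (evalb beta (S_E E' j)) = 0).
Proof.
case: n h E E' lam => [//|r] h E E' lam solE solE' [rank_h] lam_prim Gamma_lam.
have dvd_t j l : mdvd (Xmon (lam_plus lam) - Xmon (lam_minus lam)) (t_EE E E' j l).
  exact: parikh_eval_kernel lam_prim Gamma_lam (parikh_eval_t_EE solE solE' rank_h j l).
split=> // beta /(nat_row_gamma_orth Gamma_lam) /evalb_binomial evalb_B.
apply: cross_eq_dependent => j l; apply: toQx_cross; apply/eqP.
have [q t_jl] := dvd_t j l.
have : evalb beta (t_EE E E' j l) = 0.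
  by rewrite t_jl evalbE rmorphM -!evalbE evalb_B mulr0.
by rewrite /t_EE evalbE rmorphB !rmorphM -!evalbE => /eqP; rewrite subr_eq0.
Qed.
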